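(* Let $\phi$ be a uniformly convex N-function. For every interior face $\gamma\in\mathcal F(\Omega)$ and every $v_h\in V_h$ at least one of the following two equivalences holds: \[ |[\![\nabla_h v_h]\!]_\gamma|\eqsim|[\![\gamma_\tau\nabla_h v_h]\!]_\gamma|\qquad\text{or}\qquad |[\![A(\nabla_h v_h)]\!]_\gamma|\eqsim|[\![A(\nabla_h v_h)\cdot\nu]\!]_\gamma|. \]
   Context: Let $d\in\{2,3\}$, let $\Omega\subset\mathbb R^d$ be a bounded polyhedral Lipschitz domain, and let $\mathcal T$ be a regular (conforming) triangulation of $\Omega$ into $d$-simplices with faces $\mathcal F$, interior faces $\mathcal F(\Omega)=\{\gamma\in\mathcal F:\gamma\not\subset\partial\Omega\}$ and boundary faces $\mathcal F(\partial\Omega)=\mathcal F\setminus\mathcal F(\Omega)$. A function $\varphi:[0,\infty)\to[0,\infty)$ is an N-function if it is continuous and convex and $\varphi(t)=\int_0^t\varphi'(s)\,ds$ for a right-continuous non-decreasing $\varphi'$ with $\varphi'(0)=0$, $\varphi'(t)>0$ for $t>0$, $\lim_{t\to\infty}\varphi'(t)=\infty$; it is uniformly convex if there are $0<c_{uc}\le C_{uc}<\infty$ with $c_{uc}\frac{\varphi'(s)-\varphi'(t)}{s-t}\le\frac{\varphi'(s)}{s}\le C_{uc}\frac{\varphi'(s)-\varphi'(t)}{s-t}$ for all $s>0$, $t\in[0,s)$. For $Q\in\mathbb R^d$, $A(Q)=\frac{\phi'(|Q|)}{|Q|}Q$ if $Q\ne0$ and $A(0)=0$. $V_h=\{v_h$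 piecewise affine on $\mathcal T$: $v_h$ is continuous at the barycenter of every $\gamma\in\mathcal F(\Omega)$ and vanishes at the barycenter of every $\gamma\in\mathcal F(\partial\Omega)\}$ is the Crouzeix--Raviart space and $\nabla_h$ the elementwise gradient. For $\gamma\in\mathcal F(\Omega)$ fix the two simplices $T_+,T_-\in\mathcal T$ with $\gamma=T_+\cap T_-$ and let $\nu$ be the unit normal of $\gamma$ pointing from $T_+$ to $T_-$; for a piecewise constant (scalar or vector-valued) $w$ the jump is $[\![w]\!]_\gamma=w|_{T_+}-w|_{T_-}$. The tangential trace is $\gamma_\tau Q=Q\cdot(-\nu_2,\nu_1)^\top$ for $d=2$ and $\gamma_\tau Q=Q\times\nu$ for $d=3$. $a\eqsim b$ means $c\,b\le a\le C\,b$ with $0<c\le C<\infty$ depending only on $c_{uc},C_{uc}$, $d$ and the shape regularity of $\mathcal T$. *)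

From HB Require Import structures.
From mathcomp Require Import all_boot all_order all_algebra.
From mathcomp Require Import all_classical all_reals all_analysis.
Set Implicit Arguments. Unset Strict Implicit. Unset Printing Implicit Defensive.
Import Order.TTheory GRing.Theory Num.Theory.
Local Open Scope classical_set_scope.
Local Open Scope ring_scope.

Section Defs.
Variable R : realType.

Definition NFunction (phi phi' : R -> R) : Prop :=
  [/\ ((forall t, 0 <= t -> 0 <= phi t) /\
      (forall t, 0 <= t -> forall e, 0 < e -> exists2 del, 0 < del &
         forall s, 0 <= s -> `|s - t| < del -> `|phi s - phi t| < e) /\
      (forall x y l, 0 <= x -> 0 <= y -> 0 <= l <= 1 ->
         phi (l * x + (1 - l) * y) <= l * phi x + (1 - l) * phi y)),
      (forall t, 0 <= t ->
         (phi t)%:E = (\int[lebesgue_measure]_(s in `[0%R, t]) (phi' s)%:E)%E),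
      (forall t, 0 <= t -> forall e, 0 < e -> exists2 del, 0 < del &
         forall s, t <= s -> s < t + del -> `|phi' s - phi' t| < e) &
      [/\ (forall s t, 0 <= s -> s <= t -> phi' s <= phi' t),
          phi' 0 = 0,
          (forall t, 0 < t -> 0 < phi' t) &
          (forall M, exists T, forall t, T <= t -> M <= phi' t)]].

Definition unif_convex (cuc Cuc : R) (phi' : R -> R) : Prop :=
  forall s t, 0 < s -> 0 <= t -> t < s ->
    cuc * ((phi' s - phi' t) / (s - t)) <= phi' s / s /\
    phi' s / s <= Cuc * ((phi' s - phi' t) / (s - t)).

Definition dot (d : nat) (u v : 'rV[R]_d) : R := \sum_(i < d) u 0 i * v 0 i.
Definition vnorm (d : nat) (u : 'rV[R]_d) : R := Num.sqrt (dot u u).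
(* k-th coordinate (0-based); 0 if k >= d *)
Definition coord (d : nat) (u : 'rV[R]_d) (k : nat) : R :=
  \sum_(i < d | nat_of_ord i == k) u 0 i.

Definition Aop (phi' : R -> R) (d : nat) (Q : 'rV[R]_d) : 'rV[R]_d :=
  if Q == 0 then 0 else (phi' (vnorm Q) / vnorm Q) *: Q.

(* tangential traces: d = 2 : Q . (-nu_2, nu_1);  d = 3 : Q x nu *)
Definition gtau2 (d : nat) (Q nu : 'rV[R]_d) : R :=
  coord Q 0 * (- coord nu 1) + coord Q 1 * coord nu 0.
Definition gtau3 (d : nat) (Q nu : 'rV[R]_d) : 'rV[R]_3 :=
  \row_(k < 3)
    (if nat_of_ord k == 0%N then coord Q 1 * coord nu 2 - coord Q 2 * coord nu 1
     else if nat_of_ord k == 1%N then coord Q 2 * coord nu 0 - coord Q 0 * coord nu 2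
     else coord Q 0 * coord nu 1 - coord Q 1 * coord nu 0).
(* | [[ gamma_tau grad_h v_h ]] | for the piecewise constant gradient with
   value a on T_+ and b on T_- *)
Definition tjump_norm (d : nat) (a b nu : 'rV[R]_d) : R :=
  if d == 2%N then `|gtau2 a nu - gtau2 b nu|
  else vnorm (gtau3 a nu - gtau3 b nu).

(* A d-simplex with the vertices F 0, ..., F (d-1) (vertices of gamma) and
   the apex p. *)
Definition simplex_verts (d : nat) (F : 'I_d -> 'rV[R]_d) (p : 'rV[R]_d)
  (i : 'I_d.+1) : 'rV[R]_d :=
  if unlift ord0 i is Some j then F j else p.
Definition edge_det (d : nat) (F : 'I_d -> 'rV[R]_d) (p : 'rV[R]_d) : R :=
  \det (\matrix_(i < d, j < d) (F i - p) 0 j).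
Definition sdiam (d : nat) (F : 'I_d -> 'rV[R]_d) (p : 'rV[R]_d) : R :=
  \big[Num.max/0]_(i < d.+1) \big[Num.max/0]_(j < d.+1)
     vnorm (simplex_verts F p i - simplex_verts F p j).
(* shape regularity with parameter sigma: nondegenerate and
   diam(T)^d <= sigma * d! |T|  *)
Definition shape_reg (sigma : R) (d : nat) (F : 'I_d -> 'rV[R]_d)
  (p : 'rV[R]_d) : Prop :=
  edge_det F p != 0 /\ sdiam F p ^+ d <= sigma * `|edge_det F p|.

(* nu is the unit normal of gamma = conv(F) pointing from T_+ (apex pp) to
   T_- (apex pm); pp and pm lie strictly on opposite sides of gamma. *)
Definition face_normal (d : nat) (F : 'I_d -> 'rV[R]_d) (pp pm nu : 'rV[R]_d)
  : Prop :=
  [/\ vnorm nu = 1,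
      (forall i j, dot (F i - F j) nu = 0),
      (forall i, dot (pm - F i) nu > 0) &
      (forall i, dot (pp - F i) nu < 0)].

Definition bary (d : nat) (F : 'I_d -> 'rV[R]_d) : 'rV[R]_d :=
  (d%:R)^-1 *: \sum_(i < d) F i.

Definition eqsim (c C x y : R) : Prop := c * y <= x /\ x <= C * y.

End Defs.

From Pilot Require Import Defs.
From HB Require Import structures.
From mathcomp Require Import all_boot all_order all_algebra.
From mathcomp Require Import all_classical all_reals all_analysis.
From mathcomp Require Import ring lra.
Import Order.TTheory GRing.Theory Num.Theory.
Set Implicit Arguments. Unset Strict Implicit. Unset Printing Implicit Defensive.
Local Open Scope ring_scope.

(* Write [e = a - b] and [D = A(a) - A(b)].  Uniform convexity of [phi] makes
   [A] strongly monotone, [kappa |D| |e| <= D.e] with [kappa] depending only on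
   [c_uc] and [C_uc].  Splitting [D] and [e] into their components along [nu]
   and tangential to the face gives [D.e <= |D.nu| |e| + |D| |e_tau|], so one
   of the two terms is at least [kappa |D| |e| / 2]: either
   [|e| <= 2/kappa |e_tau|] or [|D| <= 2/kappa |D.nu|], the reverse
   inequalities being trivial.  For [d = 2, 3], Lagrange's identity shows that
   the tangential trace of [e] has length [|e_tau|]. *)

Section Euclid.
Variables (R : realType) (d : nat).
Implicit Types (u v w : 'rV[R]_d) (k : R).

Lemma dotC u v : dot u v = dot v u.
Proof. by apply: eq_bigr => i _; rewrite mulrC. Qed.

Lemma dotDl u v w : dot (u + v) w = dot u w + dot v w.
Proof. by rewrite /dot -big_split; apply: eq_bigr => i _; rewrite !mxE mulrDl. Qed.

Lemma dotZl k u w : dot (k *: u) w = k * dot u w.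
Proof. by rewrite /dot mulr_sumr; apply: eq_bigr => i _; rewrite !mxE mulrA. Qed.

Lemma dotNl u w : dot (- u) w = - dot u w.
Proof. by rewrite -scaleN1r dotZl mulN1r. Qed.

Lemma dotBl u v w : dot (u - v) w = dot u w - dot v w.
Proof. by rewrite dotDl dotNl. Qed.

Lemma dotBr u v w : dot w (u - v) = dot w u - dot w v.
Proof. by rewrite dotC dotBl !(dotC w). Qed.

Lemma dotZr k u w : dot w (k *: u) = k * dot w u.
Proof. by rewrite dotC dotZl dotC. Qed.

Lemma dotNN u v : dot (- u) (- v) = dot u v.
Proof. by rewrite dotNl dotC dotNl opprK dotC. Qed.

Lemma dot0l w : dot 0 w = 0.
Proof. by rewrite -(scale0r 0) dotZl mul0r. Qed.

Lemma dotuu_ge0 u : 0 <= dot u u.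
Proof. by apply: sumr_ge0 => i _; rewrite -expr2 sqr_ge0. Qed.

Lemma dotuu_eq0 u : (dot u u == 0) = (u == 0).
Proof.
apply/idP/eqP=> [|->]; last by rewrite dot0l.
rewrite psumr_eq0 => [/allP u0|i _]; last by rewrite -expr2 sqr_ge0.
apply/rowP=> i; move: (u0 i (mem_index_enum i)).
by rewrite -expr2 sqrf_eq0 mxE => /eqP.
Qed.

Lemma vnorm_ge0 u : 0 <= vnorm u.
Proof. exact: sqrtr_ge0. Qed.

Lemma vnorm_sqr u : vnorm u ^+ 2 = dot u u.
Proof. by rewrite sqr_sqrtr // dotuu_ge0. Qed.

Lemma vnorm_eq0 u : (vnorm u == 0) = (u == 0).
Proof. by rewrite -dotuu_eq0 -vnorm_sqr sqrf_eq0. Qed.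

Lemma vnormN u : vnorm (- u) = vnorm u.
Proof. by rewrite /vnorm dotNN. Qed.

Lemma vnormZ k u : vnorm (k *: u) = `|k| * vnorm u.
Proof. by rewrite /vnorm dotZl dotZr mulrA -expr2 sqrtrM ?sqr_ge0 // sqrtr_sqr. Qed.

Lemma dot_sqr_le u v : dot u v ^+ 2 <= dot u u * dot v v.
Proof.
have [->|v0] := eqVneq v 0; first by rewrite dotC !dot0l expr0n mulr0.
have vv0 : 0 < dot v v by rewrite lt_def dotuu_eq0 v0 dotuu_ge0.
have := dotuu_ge0 (dot v v *: u - dot u v *: v).
rewrite !(dotBl, dotBr, dotZl, dotZr) (dotC v u) => h.
by rewrite -(ler_pM2l vv0); nra.
Qed.

Lemma normr_dot_le u v : `|dot u v| <= vnorm u * vnorm v.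
Proof.
rewrite -ler_sqr ?nnegrE ?mulr_ge0 ?vnorm_ge0 //.
by rewrite real_normK ?num_real // exprMn !vnorm_sqr dot_sqr_le.
Qed.

Lemma dot_le u v : dot u v <= vnorm u * vnorm v.
Proof. exact: le_trans (ler_norm _) (normr_dot_le u v). Qed.

End Euclid.

Lemma eqsim_or_of_split (R : realType) (k ND NE nD TE : R) : 0 < k ->
  `|nD| <= ND -> 0 <= TE -> TE <= NE ->
  k * ND * NE <= `|nD| * NE + ND * TE ->
  eqsim 1 (2 / k) NE TE \/ eqsim 1 (2 / k) ND `|nD|.
Proof.
move=> k0 nDND TE0 TENE hk; rewrite /eqsim !mul1r.
have ND0 : 0 <= ND by apply: le_trans nDND.
have [kNE|kNE] := leP (k * NE) (2 * TE); [left|right]; split=> //.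
  by rewrite mulrAC ler_pdivlMr // mulrC.
have NE0 : 0 < NE by nra.
rewrite mulrAC ler_pdivlMr // mulrC -(ler_pM2r NE0); nra.
Qed.

Section Tangential.
Variables (R : realType) (d : nat) (nu : 'rV[R]_d).
Hypothesis unit_nu : dot nu nu = 1.
Implicit Types u v : 'rV[R]_d.

Definition tang u := u - dot u nu *: nu.

Lemma dot_tang u v : dot (tang u) (tang v) = dot u v - dot u nu * dot v nu.
Proof.
rewrite /tang !(dotBl, dotBr, dotZl, dotZr) unit_nu (dotC nu v).
by ring.
Qed.

Lemma vnorm_tang_sqr u : vnorm (tang u) ^+ 2 = vnorm u ^+ 2 - dot u nu ^+ 2.
Proof. by rewrite !vnorm_sqr dot_tang expr2. Qed.

Lemma normal_tang_le u : `|dot u nu| <= vnorm u /\ vnorm (tang u) <= vnorm u.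
Proof.
have := vnorm_tang_sqr u.
have := sqr_ge0 (dot u nu); have := sqr_ge0 (vnorm (tang u)).
split; rewrite -ler_sqr ?nnegrE ?vnorm_ge0 ?normr_ge0 ?real_normK ?num_real //; lra.
Qed.

Lemma dot_le_normal_tang u v :
  dot u v <= `|dot u nu| * `|dot v nu| + vnorm (tang u) * vnorm (tang v).
Proof.
have := dot_le (tang u) (tang v); rewrite dot_tang.
have := ler_norm (dot u nu * dot v nu); rewrite normrM; lra.
Qed.

Lemma eqsim_tang_or_normal k u v : 0 < k -> k * vnorm u * vnorm v <= dot u v ->
  eqsim 1 (2 / k) (vnorm v) (vnorm (tang v)) \/
  eqsim 1 (2 / k) (vnorm u) `|dot u nu|.
Proof.
move=> k0 huv.
have [nu_u tu] := normal_tang_le u; have [nu_v tv] := normal_tang_le v.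
apply: eqsim_or_of_split nu_u (vnorm_ge0 _) tv _ => //.
apply: le_trans huv (le_trans (dot_le_normal_tang u v) _).
by rewrite lerD // (ler_wpM2l, ler_wpM2r) ?normr_ge0 ?vnorm_ge0.
Qed.

End Tangential.

Section TangentialTraces.
Variable R : realType.

Lemma coordB d (u v : 'rV[R]_d) k :
  Defs.coord (u - v) k = Defs.coord u k - Defs.coord v k.
Proof. by rewrite /Defs.coord -sumrB; apply: eq_bigr => i _; rewrite !mxE. Qed.

Lemma coordE d (u : 'rV[R]_d) (i : 'I_d) : Defs.coord u i = u 0 i.
Proof. by rewrite /Defs.coord (big_pred1 i). Qed.

Lemma gtau2B d (a b nu : 'rV[R]_d) : gtau2 a nu - gtau2 b nu = gtau2 (a - b) nu.
Proof. by rewrite /gtau2 !coordB; ring. Qed.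

Lemma gtau3B d (a b nu : 'rV[R]_d) : gtau3 a nu - gtau3 b nu = gtau3 (a - b) nu.
Proof.
by apply/rowP=> k; rewrite !mxE !coordB; case: ifP => _; [|case: ifP => _]; ring.
Qed.

Lemma gtau2_lagrange (u nu : 'rV[R]_2) :
  gtau2 u nu ^+ 2 = dot u u * dot nu nu - dot u nu ^+ 2.
Proof.
rewrite /gtau2 !(coordE _ ord0) !(coordE _ (lift ord0 ord0)).
by rewrite /dot !big_ord_recl !big_ord0; ring.
Qed.

Lemma gtau3_lagrange (u nu : 'rV[R]_3) :
  vnorm (gtau3 u nu) ^+ 2 = dot u u * dot nu nu - dot u nu ^+ 2.
Proof.
rewrite vnorm_sqr /gtau3 /dot !big_ord_recl !big_ord0 !mxE /=.
rewrite !(coordE _ ord0) !(coordE _ (lift ord0 ord0)).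
by rewrite !(coordE _ (lift ord0 (lift ord0 ord0))); ring.
Qed.

Lemma tjump_normE d (a b nu : 'rV[R]_d) : d = 2%N \/ d = 3%N -> dot nu nu = 1 ->
  tjump_norm a b nu = vnorm (tang nu (a - b)).
Proof.
case=> ? unit_nu; subst d; rewrite /tjump_norm /= [RHS]/vnorm dot_tang //.
  by rewrite gtau2B -sqrtr_sqr gtau2_lagrange unit_nu mulr1 expr2.
by rewrite gtau3B {1}/vnorm -vnorm_sqr gtau3_lagrange unit_nu mulr1 expr2.
Qed.

End TangentialTraces.

Lemma weighted_sector_bounds (R : realType) (al be m M x1 x2 y1 y2 : R) :
  0 <= al -> 0 <= be -> 0 <= m -> 0 <= y1 -> 0 <= y2 ->
  m * y1 <= x1 <= M * y1 -> m * y2 <= x2 <= M * y2 ->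
  m * (al * (y1 * y1) + be * (y2 * y2)) <= al * (x1 * y1) + be * (x2 * y2) /\
  al * (x1 * x1) + be * (x2 * x2) <= M ^+ 2 * (al * (y1 * y1) + be * (y2 * y2)).
Proof.
move=> al_ge0 be_ge0 m_ge0 y1_ge0 y2_ge0 /andP[lo1 hi1] /andP[lo2 hi2].
have x1_ge0 : 0 <= x1 by apply: le_trans lo1; rewrite mulr_ge0.
have x2_ge0 : 0 <= x2 by apply: le_trans lo2; rewrite mulr_ge0.
split.
  have : 0 <= al * ((x1 - m * y1) * y1) by rewrite !mulr_ge0 ?subr_ge0.
  have : 0 <= be * ((x2 - m * y2) * y2) by rewrite !mulr_ge0 ?subr_ge0.
  lra.
have : 0 <= al * ((M * y1 - x1) * (M * y1 + x1)).
  by rewrite mulr_ge0 // mulr_ge0 ?subr_ge0 // addr_ge0 // (le_trans x1_ge0).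
have : 0 <= be * ((M * y2 - x2) * (M * y2 + x2)).
  by rewrite mulr_ge0 // mulr_ge0 ?subr_ge0 // addr_ge0 // (le_trans x2_ge0).
lra.
Qed.

Section TwoModes.
Variables (R : realType) (d : nat).

(* In the orthogonal frame [u = (a/|a| + b/|b|)/2], [w = (a/|a| - b/|b|)/2]
   one has [f a - g b = (f|a| - g|b|) u + (f|a| + g|b|) w], and
   [2|a||b| |u|^2 = |a||b| + a.b], [2|a||b| |w|^2 = |a||b| - a.b]. *)
Lemma two_mode_dot (f g f' g' : R) (a b : 'rV[R]_d) :
  let s := vnorm a in let t := vnorm b in
  2 * s * t * dot (f *: a - g *: b) (f' *: a - g' *: b) =
  (s * t + dot a b) * ((f * s - g * t) * (f' * s - g' * t)) +
  (s * t - dot a b) * ((f * s + g * t) * (f' * s + g' * t)).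
Proof.
move=> s t; rewrite !(dotBl, dotBr, dotZl, dotZr) (dotC b a).
by rewrite -!vnorm_sqr -/s -/t; ring.
Qed.

Lemma two_mode_sector (a b : 'rV[R]_d) (f g m M : R) :
  let s := vnorm a in let t := vnorm b in
  0 < t -> t <= s -> 0 <= m ->
  m * (s - t) <= f * s - g * t <= M * (s - t) ->
  m * (s + t) <= f * s + g * t <= M * (s + t) ->
  m * vnorm (a - b) ^+ 2 <= dot (f *: a - g *: b) (a - b) /\
  vnorm (f *: a - g *: b) <= M * vnorm (a - b).
Proof.
move=> s t t_gt0 ts m_ge0 mode1 mode2.
have st_gt0 : 0 < 2 * s * t by rewrite !mulr_gt0 // (lt_le_trans t_gt0).
have := normr_dot_le a b; rewrite ler_norml -/s -/t => /andP[p_lo p_hi].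
have al_ge0 : 0 <= s * t + dot a b by lra.
have be_ge0 : 0 <= s * t - dot a b by lra.
have y1_ge0 : 0 <= s - t by rewrite subr_ge0.
have y2_ge0 : 0 <= s + t by rewrite addr_ge0 ?vnorm_ge0.
have [lo hi] :=
  weighted_sector_bounds al_ge0 be_ge0 m_ge0 y1_ge0 y2_ge0 mode1 mode2.
move: (two_mode_dot 1 1 1 1 a b) (two_mode_dot f g 1 1 a b).
move: (two_mode_dot f g f g a b).
rewrite /= !scale1r !mul1r -!vnorm_sqr -/s -/t => eD ee eDe.
split; first by rewrite -(ler_pM2l st_gt0) mulrCA ee eDe lo.
have M_ge0 : 0 <= M.
  have st0 : 0 < s + t by rewrite ltr_wpDl ?vnorm_ge0.
  case/andP: mode2 => lo2 hi2; rewrite -(pmulr_lge0 _ st0).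
  by apply: le_trans hi2; apply: le_trans lo2; rewrite mulr_ge0.
rewrite -ler_sqr ?nnegrE ?mulr_ge0 ?vnorm_ge0 //.
by rewrite -(ler_pM2l st_gt0) exprMn [X in _ <= X]mulrCA ee eD hi.
Qed.

End TwoModes.

(* The ratio of the lower slope bound [(C_uc + 2)^-1 <= min (1/C_uc) (1/2)]
   and the upper one [c_uc^-1 + 2 >= max (1/c_uc) 2] of [phi'_diff_bounds] and
   [phi'_sum_bounds]. *)
Definition Aop_mono_const (R : realType) (cuc Cuc : R) : R :=
  (Cuc + 2)^-1 / (cuc^-1 + 2).

Section AopMonotone.
Variables (R : realType) (phi' : R -> R) (cuc Cuc : R).
Hypotheses (cuc_gt0 : 0 < cuc) (Cuc_gt0 : 0 < Cuc).
Hypothesis phi'_mono : forall s t, 0 <= s -> s <= t -> phi' s <= phi' t.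
Hypothesis phi'0 : phi' 0 = 0.
Hypothesis phi'_uc : unif_convex cuc Cuc phi'.

Lemma AopE d (a : 'rV[R]_d) : Aop phi' a = (phi' (vnorm a) / vnorm a) *: a.
Proof. by rewrite /Aop; case: eqP => [->|//]; rewrite scaler0. Qed.

Lemma phi'_ge0 t : 0 <= t -> 0 <= phi' t.
Proof. by move=> t_ge0; rewrite -phi'0 phi'_mono. Qed.

Lemma phi'_diff_bounds s t : 0 <= t -> t <= s -> 0 < s ->
  (Cuc + 2)^-1 * (phi' s / s) * (s - t) <= phi' s - phi' t <=
  (cuc^-1 + 2) * (phi' s / s) * (s - t).
Proof.
move=> t_ge0 ts s_gt0.
have [->|tns] := eqVneq t s; first by rewrite !subrr !mulr0 lexx.
have t_lt_s : t < s by rewrite lt_neqAle tns.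
have y_gt0 : 0 < s - t by rewrite subr_gt0.
have x_ge0 : 0 <= phi' s - phi' t by rewrite subr_ge0 phi'_mono.
have fsy_ge0 : 0 <= phi' s / s * (s - t).
  by rewrite !mulr_ge0 ?invr_ge0 ?phi'_ge0 ?ltW.
have [lo_uc hi_uc] := phi'_uc s_gt0 t_ge0 t_lt_s.
move: lo_uc hi_uc; rewrite !mulrA ler_pdivrMr // ler_pdivlMr // => lo_uc hi_uc.
have x_le : phi' s - phi' t <= cuc^-1 * (phi' s / s * (s - t)).
  by rewrite -(ler_pM2l cuc_gt0) mulrA mulfV ?gt_eqF // mul1r.
have lo_b : (Cuc + 2)^-1 * (phi' s / s * (s - t)) <= phi' s - phi' t.
  by rewrite mulrC ler_pdivrMr ?addr_gt0 //; lra.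
have hi_b : phi' s - phi' t <= (cuc^-1 + 2) * (phi' s / s * (s - t)) by lra.
by rewrite !mulrA in lo_b hi_b; rewrite lo_b hi_b.
Qed.

Lemma phi'_sum_bounds s t : 0 <= t -> t <= s -> 0 < s ->
  (Cuc + 2)^-1 * (phi' s / s) * (s + t) <= phi' s + phi' t <=
  (cuc^-1 + 2) * (phi' s / s) * (s + t).
Proof.
move=> t_ge0 ts s_gt0; set F := phi' s / s.
have Fs : F * s = phi' s by rewrite divfK ?gt_eqF.
have F_ge0 : 0 <= F by rewrite divr_ge0 ?phi'_ge0 ?ltW.
have Ft_le : F * t <= F * s by rewrite ler_wpM2l.
have Ft_ge0 := mulr_ge0 F_ge0 t_ge0.
have phit_ge0 := phi'_ge0 t_ge0; have phit_le := phi'_mono t_ge0 ts.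
have lo_le : (Cuc + 2)^-1 * (F * (s + t)) <= F * s.
  rewrite mulrC ler_pdivrMr ?addr_gt0 //.
  have := mulr_ge0 (mulr_ge0 F_ge0 (ltW s_gt0)) (ltW Cuc_gt0).
  lra.
have cuc_inv : 0 <= cuc^-1 by rewrite invr_ge0 ltW.
have hi_ge := mulr_ge0 cuc_inv (mulr_ge0 F_ge0 (addr_ge0 (ltW s_gt0) t_ge0)).
by apply/andP; split; lra.
Qed.

Lemma Aop_mono_const_gt0 : 0 < Aop_mono_const cuc Cuc.
Proof. by rewrite divr_gt0 ?invr_gt0 ?addr_gt0 ?invr_gt0 ?cuc_gt0 ?Cuc_gt0. Qed.

Lemma Aop_mono_const_le1 : Aop_mono_const cuc Cuc <= 1.
Proof.
have cuc_inv : 0 <= cuc^-1 by rewrite invr_ge0 ltW.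
have C_gt0 := Cuc_gt0.
have lo_le1 : (Cuc + 2)^-1 <= 1 by rewrite invf_le1; lra.
by rewrite ler_pdivrMr ?mul1r; lra.
Qed.

Lemma Aop_strong_mono d (a b : 'rV[R]_d) :
  Aop_mono_const cuc Cuc * vnorm (Aop phi' a - Aop phi' b) * vnorm (a - b) <=
  dot (Aop phi' a - Aop phi' b) (a - b).
Proof.
wlog ba : a b / vnorm b <= vnorm a.
  move=> wlog; have [/wlog//|/ltW/wlog] := leP (vnorm b) (vnorm a).
  by rewrite -(opprB a) -(opprB (Aop phi' a)) !vnormN dotNN.
have k_gt0 := Aop_mono_const_gt0.
set s := vnorm a; set F := phi' s / s.
have F_ge0 : 0 <= F by rewrite divr_ge0 ?phi'_ge0 ?vnorm_ge0.
have [->|b0] := eqVneq b 0.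
  have -> : Aop phi' (0 : 'rV_d) = 0 by rewrite /Aop eqxx.
  rewrite !subr0 AopE vnormZ dotZl -vnorm_sqr ger0_norm // -/s -/F.
  rewrite expr2 mulrA -[_ * (F * s) * s]mulrA ler_piMl ?Aop_mono_const_le1 //.
  exact: mulr_ge0 (mulr_ge0 F_ge0 (vnorm_ge0 a)) (vnorm_ge0 a).
have t_gt0 : 0 < vnorm b by rewrite lt_def vnorm_eq0 b0 vnorm_ge0.
have s_gt0 : 0 < s := lt_le_trans t_gt0 ba.
have Fs : F * s = phi' s by rewrite divfK ?gt_eqF.
have Ft : phi' (vnorm b) / vnorm b * vnorm b = phi' (vnorm b).
  by rewrite divfK ?gt_eqF.
have [] := two_mode_sector (f := F) (g := phi' (vnorm b) / vnorm b)
  (m := (Cuc + 2)^-1 * F) (M := (cuc^-1 + 2) * F) t_gt0 ba _ _ _.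
- by rewrite mulr_ge0 // invr_ge0 addr_ge0 ?ltW.
- by rewrite Fs Ft; apply: phi'_diff_bounds (vnorm_ge0 b) ba s_gt0.
- by rewrite Fs Ft; apply: phi'_sum_bounds (vnorm_ge0 b) ba s_gt0.
rewrite -/s -/F -!AopE => sector_dot sector_norm; apply: le_trans sector_dot.
apply: le_trans (_ : _ <= Aop_mono_const cuc Cuc *
  ((cuc^-1 + 2) * F * vnorm (a - b)) * vnorm (a - b)) _.
  by rewrite ler_wpM2r ?vnorm_ge0 // ler_wpM2l // ltW.
rewrite le_eqVlt; apply/orP; left; apply/eqP.
by rewrite /Aop_mono_const; field; rewrite !gt_eqF ?addr_gt0 ?mulr_gt0.
Qed.

End AopMonotone.

Theorem lemma3p1 (R : realType) (d : nat) (hd : d = 2%N \/ d = 3%N)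
  (cuc Cuc : R) (hcuc : 0 < cuc) (hCuc : cuc <= Cuc) (sigma : R) :
  exists c C : R, [/\ 0 < c, c <= C &
    forall phi phi' : R -> R,
      NFunction phi phi' -> unif_convex cuc Cuc phi' ->
    forall (F : 'I_d -> 'rV[R]_d) (pp pm nu : 'rV[R]_d),
      shape_reg sigma F pp -> shape_reg sigma F pm ->
      face_normal F pp pm nu ->
    (* v_h|T_+ (x) = a.x + al,  v_h|T_- (x) = b.x + be, continuous at the
       barycenter of gamma *)
    forall (a b : 'rV[R]_d) (al be : R),
      dot a (bary F) + al = dot b (bary F) + be ->
      eqsim c C (vnorm (a - b)) (tjump_norm a b nu) \/
      eqsim c C (vnorm (Aop phi' a - Aop phi' b))
                `|dot (Aop phi' a) nu - dot (Aop phi' b) nu| ].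
Proof.
have Cuc_gt0 : 0 < Cuc := lt_le_trans hcuc hCuc.
have k_gt0 := Aop_mono_const_gt0 hcuc Cuc_gt0.
exists 1, (2 / Aop_mono_const cuc Cuc); split => //.
  have := Aop_mono_const_le1 hcuc Cuc_gt0.
  by rewrite ler_pdivlMr // mul1r; lra.
move=> phi phi' [_ _ _ [phi'_mono phi'0 _ _]] phi'_uc F pp pm nu _ _ [nu1 _ _ _].
move=> a b al be _; have unit_nu : dot nu nu = 1 by rewrite -vnorm_sqr nu1 expr1n.
rewrite tjump_normE // -dotBl.
exact/(eqsim_tang_or_normal unit_nu k_gt0)/Aop_strong_mono.
Qed.
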